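(* Let $T$ be a locally finite simplicial tree with a fixed base vertex $x_0$, equipped with the metric $d$ described in the context, and let $\overline{T}=T\cup\partial T$ be its compactification by geodesic rays issuing from $x_0$, with the extended metric $d$ described in the context. Then $(\overline{T},d)$ is a $1$-transfer space. That is, $(\overline{T},d)$ is a compact contractible metric space, and for every $\delta>0$ there exist a simplicial complex $K$ of dimension at most $1$, continuous maps $i:\overline{T}\to K$ and $p:K\to\overline{T}$, and a homotopy $H:[0,1]\times\overline{T}\to\overline{T}$ from $p\circ i$ to $\mathrm{Id}_{\overline{T}}$ such that for every $x\in\overline{T}$, $\operatorname{diam}\{H(t,x)\mid t\in[0,1]\}\le\delta$.
   Context: A simplicial tree is a connected, simply connected simplicial complex of dimension $1$; locally finite means every vertex lies on finitely many edges. We work with its geometric realization. Fix a vertex $x_0$. For a vertex $v$ let $|v|$ be the minimal number of edges in an edge path from $x_0$ to $v$. Each edge joining a vertex $u$ with $|u|=n-1$ to a vertex $v$ with $|v|=n$ ($n\ge 1$) is given length $1/2^n$ (isometric to a Euclidean segment of that length), and $d$ on $T$ is the induced path (length) metric; $(T,d)$ is a uniquely geodesic metric space, and $d(x,x_0)<1$ for all $x\in T$. Write $d(x)=d(x,x_0)$ and define the Gromov product $(x|y)=\frac12(d(x)+d(y)-d(x,y))$; in $T$ this is the length of the common initial segment of the geodesics from $x_0$ to $x$ and to $y$. The boundary $\partial T$ is the set of geodesic rays in $T$ issuing from $x_0$, i.e. infinite sequences of vertices $x_0=v_0,v_1,v_2,\dots$ with $v_i,v_{i+1}$ adjacent and $|v_i|=i$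 (equivalently, equivalence classes of sequences $(x_i)$ in $T$ with $(x_i|x_j)\to 1$, where $(x_i)\sim(y_j)$ iff $\liminf_{i,j\to\infty}(x_i|y_j)=1$); each such ray has total length $\sum_{i\ge1}2^{-i}=1$. Set $\overline{T}=T\cup\partial T$. Each point $z\in\overline{T}$ determines a geodesic from $x_0$ (a finite segment of length $d(z)$ if $z\in T$, an infinite ray of length $d(z):=1$ if $z\in\partial T$); for $z,w\in\overline{T}$ let $(z|w)$ be the length of the common initial part of these two geodesics, and define $d(z,w)=d(z)+d(w)-2(z|w)$. In particular for $\chi,\chi'\in\partial T$, $d(\chi,\chi')=2(1-(\chi|\chi'))$ is the sum of the lengths of the two tails of the rays after their last common point, and $d(\chi,x_0)=1$. This extends the metric $d$ on $T$. *)

From Stdlib Require Import Reals Lra List.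
From Coquelicot Require Import Rbar Lub.
Open Scope R_scope.

Definition is_metric {X : Type} (d : X -> X -> R) : Prop :=
  (forall x y, 0 <= d x y) /\
  (forall x y, d x y = 0 <-> x = y) /\
  (forall x y, d x y = d y x) /\
  (forall x y z, d x z <= d x y + d y z).

Definition is_open {X : Type} (d : X -> X -> R) (U : X -> Prop) : Prop :=
  forall x, U x -> exists e, 0 < e /\ forall y, d x y < e -> U y.

Definition is_compact {X : Type} (d : X -> X -> R) : Prop :=
  forall (I : Type) (U : I -> X -> Prop),
    (forall i, is_open d (U i)) ->
    (forall x, exists i, U i x) ->
    exists l : list I, forall x, exists i, In i l /\ U i x.

Definition cont_on {X Y : Type} (dX : X -> X -> R) (A : X -> Prop)
    (dY : Y -> Y -> R) (f : X -> Y) : Prop :=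
  forall x, A x -> forall e, 0 < e ->
    exists del, 0 < del /\
      forall y, A y -> dX x y < del -> dY (f x) (f y) < e.

(* the product metric on [0,1] x X (max metric; induces the product topology) *)
Definition prod_dist {X : Type} (d : X -> X -> R) (p q : R * X) : R :=
  Rmax (Rabs (fst p - fst q)) (d (snd p) (snd q)).

Definition unit_interval_x {X : Type} (p : R * X) : Prop :=
  0 <= fst p <= 1.

Definition homotopy_cont {X Y : Type} (dX : X -> X -> R) (dY : Y -> Y -> R)
    (H : R -> X -> Y) : Prop :=
  cont_on (prod_dist dX) unit_interval_x dY (fun p => H (fst p) (snd p)).

Definition contractible {X : Type} (d : X -> X -> R) : Prop :=
  exists (c : X) (H : R -> X -> X),
    homotopy_cont d d H /\
    (forall x, H 0 x = x) /\ (forall x, H 1 x = c).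

Definition simplicial_complex_dim_le (n : nat) (simp : list nat -> Prop)
    (N : nat) : Prop :=
  (forall s, simp s ->
     s <> nil /\ NoDup s /\ (forall j, In j s -> (j < n)%nat) /\
     (length s <= S N)%nat) /\
  (forall s s', simp s -> s' <> nil -> NoDup s' -> incl s' s -> simp s') /\
  (forall j, (j < n)%nat -> simp (j :: nil)).

Definition sumR (l : list R) : R := fold_right Rplus 0 l.

(* points of |K| are given by barycentric coordinates b : nat -> R *)
Definition in_realization (n : nat) (simp : list nat -> Prop) (b : nat -> R)
    : Prop :=
  (forall j, 0 <= b j) /\
  (forall j, (n <= j)%nat -> b j = 0) /\
  sumR (map b (seq 0 n)) = 1 /\
  exists s, simp s /\ forall j, b j <> 0 -> In j s.

(* |K| with the subspace topology of R^n (l^1 distance) *)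
Definition real_dist (n : nat) (b b' : nat -> R) : R :=
  sumR (map (fun j => Rabs (b j - b' j)) (seq 0 n)).

Definition transfer_space {X : Type} (d : X -> X -> R) (N : nat) : Prop :=
  is_metric d /\ is_compact d /\ contractible d /\
  forall delta, 0 < delta ->
    exists (n : nat) (simp : list nat -> Prop),
      simplicial_complex_dim_le n simp N /\
      exists (i : X -> (nat -> R)) (p : (nat -> R) -> X) (H : R -> X -> X),
        (forall x, in_realization n simp (i x)) /\
        cont_on d (fun _ => True) (real_dist n) i /\
        cont_on (real_dist n) (in_realization n simp) d p /\
        homotopy_cont d d H /\
        (forall x, H 0 x = p (i x)) /\
        (forall x, H 1 x = x) /\
        (forall x s s', 0 <= s <= 1 -> 0 <= s' <= 1 ->
           d (H s x) (H s' x) <= delta).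

Definition walk {V : Type} (adj : V -> V -> Prop) (u v : V) (n : nat) : Prop :=
  exists f : nat -> V, f 0%nat = u /\ f n = v /\
    forall i, (i < n)%nat -> adj (f i) (f (S i)).

(* simplicial tree: 1-dim simplicial complex (simple graph), connected,
   simply connected (= no cycle) *)
Definition simplicial_tree {V : Type} (adj : V -> V -> Prop) : Prop :=
  (forall u v, adj u v -> adj v u) /\
  (forall v, ~ adj v v) /\
  (forall u v, exists n, walk adj u v n) /\
  ~ (exists (n : nat) (f : nat -> V),
       (3 <= n)%nat /\ f n = f 0%nat /\
       (forall i, (i < n)%nat -> adj (f i) (f (S i))) /\
       (forall i j, (i < n)%nat -> (j < n)%nat -> f i = f j -> i = j)).

Definition locally_finite {V : Type} (adj : V -> V -> Prop) : Prop :=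
  forall v, exists l : list V, forall w, adj v w -> In w l.

Definition level {V : Type} (adj : V -> V -> Prop) (x0 v : V) (n : nat) : Prop :=
  walk adj x0 v n /\ forall m, walk adj x0 v m -> (n <= m)%nat.

(* The compactification Tbar = T u dT.  A point z is encoded by its    *)
(* geodesic from x0: tt = d(z) in [0,1], and g i = the level-i vertex  *)
(* of that geodesic, defined exactly for i = 0 and for the levels i    *)
(* whose incoming edge (which starts at distance 1 - 2^-(i-1) from x0)  *)
(* is entered by the geodesic.  Edges to level n have length 2^-n.     *)
(* tt = 1 exactly for the boundary points (geodesic rays).             *)

Record Tbar {V : Type} (adj : V -> V -> Prop) (x0 : V) : Type := mkTbar {
  g : nat -> option V;
  tt : R;
  tt_range : 0 <= tt <= 1;
  g_0 : g 0%nat = Some x0;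
  g_def : forall i, (exists v, g (S i) = Some v) <-> 1 - (1/2)^i < tt;
  g_level : forall i v, g i = Some v -> level adj x0 v i;
  g_adj : forall i u v, g i = Some u -> g (S i) = Some v -> adj u v
}.
Arguments g {V adj x0}.
Arguments tt {V adj x0}.

Definition agree {V : Type} {adj : V -> V -> Prop} {x0 : V}
    (z w : Tbar adj x0) (k : nat) : Prop :=
  forall i, (i <= k)%nat -> g z i = g w i.

(* length of the common initial part of the geodesics of z and w:
   Gromov product (z|w) *)
Definition gromov {V : Type} {adj : V -> V -> Prop} {x0 : V}
    (z w : Tbar adj x0) : R :=
  Rmin (Rmin (tt z) (tt w))
       (real (Lub_Rbar (fun r => exists k, agree z w k /\ r = 1 - (1/2)^k))).

Definition Tbar_dist {V : Type} (adj : V -> V -> Prop) (x0 : V)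
    (z w : Tbar adj x0) : R :=
  tt z + tt w - 2 * gromov z w.

From Stdlib Require Import Reals Lra Lia Arith List Classical ClassicalEpsilon
  FunctionalExtensionality ProofIrrelevance.
From Coquelicot Require Import Rbar Lub.
Open Scope R_scope.

(* A point of the compactification is its geodesic from [x0], and [d z w] is
   [d z + d w - 2 (z|w)] with [(z|w)] the minimum of [d z], [d w] and the distance at
   which the two geodesics split.  Truncating geodesics, [(z, t) |-> trunc z t], is
   1-Lipschitz in each variable: at radius [1 - s] it contracts the space to [x0], and
   at radius [1 - 2^-m] it retracts it onto the finite subtree [T_m] spanned by the
   vertices of level at most [m], moving every point by at most [2^-m].  [T_m] is the
   realization of a finite 1-dimensional complex [K]: barycentric coordinates of a
   point of [T_m] are tent functions of its distance to [x0], and conversely a point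
   [b] of [|K|] is sent to the point at distance [sum_k b_k d(Q_k)] on the geodesic of
   the deeper vertex of its simplex.  Compactness is Koenig's lemma: if an open cover
   has no finite subcover, some vertex of every level has a cone without one, these
   vertices form a ray, and a neighbourhood of that ray contains a whole cone. *)

(** * Finite sums and lists *)

Lemma sumR_map_ext f h s len : (forall k, (s <= k < s + len)%nat -> f k = h k) ->
  sumR (map f (seq s len)) = sumR (map h (seq s len)).
Proof.
  revert s; induction len as [|len IH]; intros s H; simpl; auto.
  rewrite H, (IH (S s)); auto; [intros k Hk; apply H|]; lia.
Qed.

Lemma sumR_map_eq0 f s len : (forall k, (s <= k < s + len)%nat -> f k = 0) ->
  sumR (map f (seq s len)) = 0.
Proof.
  revert s; induction len as [|len IH]; intros s H; simpl; auto.
  rewrite H, (IH (S s)); [lra| |lia]. intros k Hk; apply H; lia.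
Qed.

Lemma sumR_map_neq0 f s len : sumR (map f (seq s len)) <> 0 ->
  exists k, (s <= k < s + len)%nat /\ f k <> 0.
Proof.
  intros H. apply NNPP; intros Hn. apply H, sumR_map_eq0. intros k Hk.
  apply NNPP; intros Hf; apply Hn; eauto.
Qed.

Lemma sumR_map_single f s len a : (forall k, k <> a -> f k = 0) ->
  (s <= a < s + len)%nat -> sumR (map f (seq s len)) = f a.
Proof.
  revert s; induction len as [|len IH]; intros s H Ha; [lia|]; simpl.
  destruct (Nat.eq_dec s a) as [<-|Hne].
  - rewrite sumR_map_eq0; [lra|]. intros k Hk; apply H; lia.
  - rewrite H, (IH (S s)); auto; [lra|lia].
Qed.

Lemma sumR_map_add f h s len : sumR (map (fun k => f k + h k) (seq s len)) =
  sumR (map f (seq s len)) + sumR (map h (seq s len)).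
Proof. revert s; induction len as [|len IH]; intros s; simpl; [lra|rewrite IH; lra]. Qed.

Lemma sumR_map_pair f s len a c : (forall k, k <> a -> k <> c -> f k = 0) -> a <> c ->
  (s <= a < s + len)%nat -> (s <= c < s + len)%nat ->
  sumR (map f (seq s len)) = f a + f c.
Proof.
  intros H Hac Ha Hc.
  set (fa := fun k => if Nat.eq_dec k a then f k else 0).
  set (fc := fun k => if Nat.eq_dec k a then 0 else f k).
  rewrite (sumR_map_ext f (fun k => fa k + fc k)), sumR_map_add;
    [|intros k _; unfold fa, fc; destruct Nat.eq_dec; lra].
  rewrite (sumR_map_single fa s len a), (sumR_map_single fc s len c); auto;
    unfold fa, fc; intros; repeat destruct Nat.eq_dec; auto; congruence.
Qed.

Lemma sumR_map_le f h s len : (forall k, (s <= k < s + len)%nat -> f k <= h k) ->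
  sumR (map f (seq s len)) <= sumR (map h (seq s len)).
Proof.
  revert s; induction len as [|len IH]; intros s H; simpl; [lra|].
  pose proof (H s ltac:(lia)). pose proof (IH (S s) ltac:(intros; apply H; lia)). lra.
Qed.

Lemma sumR_map_ge0 f s len : (forall k, 0 <= f k) -> 0 <= sumR (map f (seq s len)).
Proof.
  intros H. revert s; induction len as [|len IH]; intros s; simpl; [lra|].
  pose proof (H s); pose proof (IH (S s)); lra.
Qed.

Lemma sumR_map_term_le f s len k : (forall j, 0 <= f j) -> (s <= k < s + len)%nat ->
  f k <= sumR (map f (seq s len)).
Proof.
  intros H. revert s; induction len as [|len IH]; intros s Hk; [lia|]; simpl.
  destruct (Nat.eq_dec s k) as [->|Hne].
  - pose proof (sumR_map_ge0 f (S k) len H); lra.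
  - pose proof (H s); pose proof (IH (S s) ltac:(lia)); lra.
Qed.

Lemma sumR_map_mulr f c s len :
  sumR (map (fun k => f k * c) (seq s len)) = sumR (map f (seq s len)) * c.
Proof. revert s; induction len as [|len IH]; intros s; simpl; [lra|rewrite IH; lra]. Qed.

Lemma sumR_map_le_const f M s len : (forall k, f k <= M) ->
  sumR (map f (seq s len)) <= INR len * M.
Proof.
  intros H. revert s; induction len as [|len IH]; intros s; [simpl; lra|].
  rewrite S_INR; simpl. pose proof (H s); pose proof (IH (S s)); lra.
Qed.

Lemma Rabs_sumR_map_sub f h s len :
  Rabs (sumR (map f (seq s len)) - sumR (map h (seq s len))) <=
  sumR (map (fun k => Rabs (f k - h k)) (seq s len)).
Proof.
  revert s; induction len as [|len IH]; intros s; simpl.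
  { rewrite Rminus_0_r, Rabs_R0; lra. }
  pose proof (IH (S s)) as IHs.
  set (F := sumR (map f (seq (S s) len))) in *; set (H := sumR (map h (seq (S s) len))) in *.
  replace (f s + F - (h s + H)) with (f s - h s + (F - H)) by ring.
  pose proof (Rabs_triang (f s - h s) (F - H)); lra.
Qed.

Lemma incl_pair_cases (a c : nat) s : s <> nil -> NoDup s -> incl s (a :: c :: nil) ->
  s = a :: nil \/ s = c :: nil \/ s = a :: c :: nil \/ s = c :: a :: nil.
Proof.
  intros Hn Hnd Hi. destruct s as [|x [|y [|z r]]]; [contradiction| | |].
  - destruct (Hi x (or_introl eq_refl)) as [<-|[<-|[]]]; auto.
  - apply NoDup_cons_iff in Hnd as [Hxy _].
    destruct (Hi x (or_introl eq_refl)) as [<-|[<-|[]]];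
    destruct (Hi y (or_intror (or_introl eq_refl))) as [<-|[<-|[]]]; auto;
    exfalso; apply Hxy; left; auto.
  - exfalso. apply NoDup_cons_iff in Hnd as [Hx Hnd]. apply NoDup_cons_iff in Hnd as [Hy _].
    destruct (Hi x (or_introl eq_refl)) as [<-|[<-|[]]];
    destruct (Hi y (or_intror (or_introl eq_refl))) as [<-|[<-|[]]];
    destruct (Hi z (or_intror (or_intror (or_introl eq_refl)))) as [<-|[<-|[]]];
    try (apply Hx; simpl; auto; fail); try (apply Hy; simpl; auto; fail).
Qed.

(** * Dyadic radii and tent functions *)

Lemma half_pow_pos k : 0 < (1/2)^k.
Proof. apply pow_lt; lra. Qed.

Lemma half_pow_le1 k : (1/2)^k <= 1.
Proof. induction k as [|k IH]; simpl; [lra|]. pose proof (half_pow_pos k); lra. Qed.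

Lemma half_pow_S k : (1/2)^(S k) = (1/2)^k / 2.
Proof. simpl; lra. Qed.

Lemma half_pow_lt a b : (a < b)%nat -> (1/2)^b < (1/2)^a.
Proof.
  induction 1; rewrite half_pow_S; [pose proof (half_pow_pos a)|pose proof (half_pow_pos m)];
    lra.
Qed.

Lemma half_pow_lt_ex e : 0 < e -> exists k, (1/2)^k < e.
Proof.
  intros He. destruct (pow_lt_1_zero (1/2) ltac:(rewrite Rabs_pos_eq; lra) e He) as [N HN].
  exists N. specialize (HN N (le_n N)). rewrite Rabs_pos_eq in HN; auto.
  left; apply half_pow_pos.
Qed.

Lemma pow2_mul_half_pow k : 2^k * (1/2)^k = 1.
Proof. rewrite <- Rpow_mult_distr. replace (2 * (1/2)) with 1 by lra. apply pow1. Qed.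

Definition rad (k : nat) : R := 1 - (1/2)^k.

Lemma rad_0 : rad 0 = 0.
Proof. unfold rad; simpl; lra. Qed.

Lemma rad_S k : rad (S k) = rad k + (1/2)^(S k).
Proof. unfold rad; rewrite half_pow_S; lra. Qed.

Lemma rad_lt a b : (a < b)%nat -> rad a < rad b.
Proof. intros H; unfold rad; pose proof (half_pow_lt a b H); lra. Qed.

Lemma rad_le a b : (a <= b)%nat -> rad a <= rad b.
Proof. intros H; destruct (Nat.eq_dec a b) as [->|]; [lra|left; apply rad_lt; lia]. Qed.

Lemma rad_lt_inv a b : rad a < rad b -> (a < b)%nat.
Proof.
  intros H. destruct (Nat.lt_ge_cases a b) as [|Hba]; auto. pose proof (rad_le b a Hba); lra.
Qed.

Lemma rad_ge0 k : 0 <= rad k.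
Proof. unfold rad; pose proof (half_pow_le1 k); lra. Qed.

Lemma rad_lt1 k : rad k < 1.
Proof. unfold rad; pose proof (half_pow_pos k); lra. Qed.

Lemma rad_gt_ex c : c < 1 -> exists k, c < rad k.
Proof.
  intros Hc. destruct (half_pow_lt_ex (1 - c)) as [k Hk]; [lra|]. exists k; unfold rad; lra.
Qed.

Lemma switch_point (P : nat -> Prop) N : ~ P 0%nat -> P N -> exists k, ~ P k /\ P (S k).
Proof.
  intros H0 HN. induction N as [|N IH]; [contradiction|].
  destruct (classic (P N)); [apply IH|exists N]; auto.
Qed.

Lemma rad_bracket m t : 0 <= t <= rad m -> exists j, (j <= m)%nat /\ rad j <= t < rad (S j).
Proof.
  intros Ht. destruct (switch_point (fun k => t < rad k) (S m)) as [j [Hj1 Hj2]].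
  - rewrite rad_0; lra.
  - pose proof (rad_lt m (S m) (Nat.lt_succ_diag_r m)); lra.
  - apply Rnot_lt_le in Hj1. exists j; repeat split; auto.
    destruct (Nat.le_gt_cases j m) as [|Hmj]; auto. pose proof (rad_lt m j Hmj); lra.
Qed.

(* The tent function of level [j] is the barycentric coordinate of the level-[j]
   vertex along a geodesic, as a function of the distance to [x0]: it is 1 at
   [rad j] and affine on the edges [rad (j-1), rad j] and [rad j, rad (S j)]. *)
Definition tent_lo (j : nat) : R := match j with O => -1 | S j' => rad j' end.
Definition slope_r (j : nat) : R := 2^(S j).
Definition slope_l (j : nat) : R := match j with O => 1 | S j' => slope_r j' end.
Definition tent (j : nat) (t : R) : R :=
  Rmax 0 (Rmin ((t - tent_lo j) * slope_l j) ((rad (S j) - t) * slope_r j)).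

Lemma slope_r_pos j : 0 < slope_r j.
Proof. apply pow_lt; lra. Qed.

Lemma slope_l_pos j : 0 < slope_l j.
Proof. destruct j; [simpl; lra|apply slope_r_pos]. Qed.

Lemma slope_r_edge j : (rad (S j) - rad j) * slope_r j = 1.
Proof. unfold slope_r; rewrite rad_S, Rmult_comm; ring_simplify; apply pow2_mul_half_pow. Qed.

Lemma slope_l_edge j : (rad j - tent_lo j) * slope_l j = 1.
Proof. destruct j; [simpl; rewrite rad_0; lra|apply slope_r_edge]. Qed.

Lemma tent_ge0 j t : 0 <= tent j t.
Proof. apply Rmax_l. Qed.

Lemma tent_edge_l j t : rad j <= t <= rad (S j) -> tent j t = (rad (S j) - t) * slope_r j.
Proof.
  intros H. pose proof (slope_l_edge j); pose proof (slope_r_edge j).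
  pose proof (slope_l_pos j); pose proof (slope_r_pos j).
  unfold tent. rewrite Rmin_right, Rmax_right; nra.
Qed.

Lemma tent_edge_r j t : rad j <= t <= rad (S j) -> tent (S j) t = (t - rad j) * slope_r j.
Proof.
  intros H. pose proof (slope_r_edge j); pose proof (slope_r_edge (S j)).
  pose proof (slope_r_pos j); pose proof (slope_r_pos (S j)).
  unfold tent; cbn [tent_lo slope_l]. rewrite Rmin_left, Rmax_right; nra.
Qed.

Lemma tent_partition j t : rad j <= t <= rad (S j) -> tent j t + tent (S j) t = 1.
Proof. intros H. rewrite tent_edge_l, tent_edge_r by auto. pose proof (slope_r_edge j). lra. Qed.

Lemma tent_barycenter j t : rad j <= t <= rad (S j) ->
  tent j t * rad j + tent (S j) t * rad (S j) = t.
Proof.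
  intros H. rewrite tent_edge_l, tent_edge_r by auto. pose proof (slope_r_edge j) as E.
  transitivity (t * ((rad (S j) - rad j) * slope_r j)); [ring|rewrite E; ring].
Qed.

Lemma tent_rad j : tent j (rad j) = 1.
Proof.
  rewrite tent_edge_l; [apply slope_r_edge|pose proof (rad_le j (S j) (Nat.le_succ_diag_r j)); lra].
Qed.

Lemma tent_eq0_le j t : t <= tent_lo j -> tent j t = 0.
Proof.
  intros H. pose proof (slope_l_pos j). unfold tent. apply Rmax_left.
  pose proof (Rmin_l ((t - tent_lo j) * slope_l j) ((rad (S j) - t) * slope_r j)). nra.
Qed.

Lemma tent_eq0_ge j t : rad (S j) <= t -> tent j t = 0.
Proof.
  intros H. pose proof (slope_r_pos j). unfold tent. apply Rmax_left.
  pose proof (Rmin_r ((t - tent_lo j) * slope_l j) ((rad (S j) - t) * slope_r j)). nra.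
Qed.

Lemma tent_S_pos j t : rad j < t <= rad (S j) -> 0 < tent (S j) t.
Proof. intros H. rewrite tent_edge_r by lra. pose proof (slope_r_pos j). nra. Qed.

Lemma tent_neq0_level l j t : rad j <= t < rad (S j) -> tent l t <> 0 -> l = j \/ l = S j.
Proof.
  intros Ht Hl. destruct (Nat.lt_trichotomy l j) as [Hlt|[|Hgt]]; auto.
  - exfalso; apply Hl, tent_eq0_ge. pose proof (rad_le (S l) j Hlt); lra.
  - destruct l as [|l]; [lia|]. destruct (Nat.eq_dec l j) as [->|Hne]; auto.
    exfalso; apply Hl, tent_eq0_le. pose proof (rad_le (S j) l ltac:(lia)); simpl; lra.
Qed.

Lemma tent_lipschitz j t t' C : slope_l j <= C -> slope_r j <= C ->
  Rabs (tent j t - tent j t') <= C * Rabs (t - t').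
Proof.
  intros Hl Hr. pose proof (slope_l_pos j); pose proof (slope_r_pos j).
  assert (Hmax : forall a b, Rabs (Rmax 0 a - Rmax 0 b) <= Rabs (a - b)).
  { intros a b; unfold Rmax, Rabs; repeat destruct Rle_dec; repeat destruct Rcase_abs; lra. }
  assert (Hmin : forall a1 a2 b1 b2,
    Rabs (Rmin a1 a2 - Rmin b1 b2) <= Rmax (Rabs (a1 - b1)) (Rabs (a2 - b2))).
  { intros; unfold Rmin, Rmax, Rabs; repeat destruct Rle_dec; repeat destruct Rcase_abs; lra. }
  unfold tent. eapply Rle_trans; [apply Hmax|]. eapply Rle_trans; [apply Hmin|].
  apply Rmax_lub; unfold Rabs; repeat destruct Rcase_abs; nra.
Qed.

Lemma tent_le_sub_lo j t C e : slope_l j <= C -> 0 <= e -> t - tent_lo j <= e ->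
  tent j t <= C * e.
Proof.
  intros HC He Ht. pose proof (slope_l_pos j). unfold tent.
  apply Rmax_lub; [nra|]. eapply Rle_trans; [apply Rmin_l|]. nra.
Qed.

(** * The metric of the compactification *)

Section Tree.
Variables (V : Type) (adj : V -> V -> Prop) (x0 : V).
Notation T := (Tbar adj x0).
Notation dT := (Tbar_dist adj x0).

Lemma Tbar_ext (z w : T) : (forall i, g z i = g w i) -> tt z = tt w -> z = w.
Proof.
  destruct z as [g1 t1 r1 a1 b1 c1 d1], w as [g2 t2 r2 a2 b2 c2 d2]; simpl.
  intros Hg Ht. assert (g1 = g2) by (apply functional_extensionality; auto). subst.
  f_equal; apply proof_irrelevance.
Qed.

Lemma tt_bounds (z : T) : 0 <= tt z <= 1.
Proof. exact (tt_range _ _ z). Qed.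

Lemma g_S_Some_iff (z : T) i : (exists v, g z (S i) = Some v) <-> rad i < tt z.
Proof. exact (g_def _ _ z i). Qed.

Lemma g_S_None_iff (z : T) i : g z (S i) = None <-> tt z <= rad i.
Proof.
  pose proof (g_S_Some_iff z i) as H. split.
  - intros E. destruct (Rle_lt_dec (tt z) (rad i)) as [|Hlt]; auto.
    destruct (proj2 H Hlt); congruence.
  - intros Hle. destruct (g z (S i)) eqn:E; auto.
    assert (rad i < tt z) by (apply H; eauto). lra.
Qed.

Lemma agree0 (z w : T) : agree z w 0.
Proof. intros i Hi. replace i with 0%nat by lia. now rewrite !g_0. Qed.

Lemma agree_sym (z w : T) k : agree z w k -> agree w z k.
Proof. intros H i Hi; symmetry; auto. Qed.

Lemma agree_trans (z w u : T) k : agree z w k -> agree w u k -> agree z u k.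
Proof. intros H1 H2 i Hi; rewrite H1; auto. Qed.

Lemma agree_le (z w : T) k k' : (k' <= k)%nat -> agree z w k -> agree z w k'.
Proof. intros H1 H2 i Hi; apply H2; lia. Qed.

(* The distance from [x0] at which the geodesics of [z] and [w] split; [gromov z w] is
   its minimum with [tt z] and [tt w]. *)
Definition branch (z w : T) : R :=
  real (Lub_Rbar (fun r => exists k, agree z w k /\ r = 1 - (1/2)^k)).

Lemma Tbar_distE z w : dT z w = tt z + tt w - 2 * Rmin (Rmin (tt z) (tt w)) (branch z w).
Proof. reflexivity. Qed.

Lemma branch_spec z w : (forall k, agree z w k -> rad k <= branch z w) /\
  (forall c, (forall k, agree z w k -> rad k <= c) -> branch z w <= c).
Proof.
  set (E := fun r => exists k, agree z w k /\ r = 1 - (1/2)^k).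
  destruct (Lub_Rbar_correct E) as [Hub Hlub].
  assert (ub1 : is_ub_Rbar E 1).
  { intros x [k [_ ->]]; simpl. pose proof (half_pow_pos k); lra. }
  assert (E0 : E 0) by (exists 0%nat; split; [apply agree0|simpl; lra]).
  pose proof (Hub _ E0) as H0. pose proof (Hlub _ ub1) as H1.
  unfold branch; fold E. destruct (Lub_Rbar E) as [l| |]; simpl in *; try contradiction.
  split.
  - intros k Hk. apply (Hub (rad k)). exists k; split; auto.
  - intros c Hc. apply (Hlub c). intros x [k [Hk ->]]. apply Hc; auto.
Qed.

Lemma branch_ge z w k : agree z w k -> rad k <= branch z w.
Proof. apply branch_spec. Qed.

Lemma branch_le z w c : (forall k, agree z w k -> rad k <= c) -> branch z w <= c.
Proof. apply branch_spec. Qed.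

Lemma branch_ge0 z w : 0 <= branch z w.
Proof. rewrite <- rad_0. apply branch_ge, agree0. Qed.

Lemma branch_gt_ex z w c : c < branch z w -> exists k, agree z w k /\ c < rad k.
Proof.
  intros H. apply NNPP; intros Hn. assert (branch z w <= c); [|lra].
  apply branch_le. intros k Hk. apply Rnot_lt_le; intros Hlt; apply Hn; eauto.
Qed.

Lemma branch_sym z w : branch z w = branch w z.
Proof. apply Rle_antisym; apply branch_le; intros k Hk; apply branch_ge, agree_sym; auto. Qed.

Lemma branch_ultra x y z : Rmin (branch x y) (branch y z) <= branch x z.
Proof.
  apply Rnot_lt_le; intros H. apply Rmin_Rgt in H as [H1 H2].
  destruct (branch_gt_ex _ _ _ H1) as [k1 [Hk1 Hr1]].
  destruct (branch_gt_ex _ _ _ H2) as [k2 [Hk2 Hr2]].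
  assert (Hk : agree x z (Nat.min k1 k2)).
  { apply agree_trans with y; [apply agree_le with k1|apply agree_le with k2]; auto; lia. }
  apply branch_ge in Hk. destruct (Nat.min_spec k1 k2) as [[_ E]|[_ E]]; rewrite E in Hk; lra.
Qed.

Lemma branch_le_of_neq z w i : g z (S i) <> g w (S i) -> branch z w <= rad i.
Proof.
  intros H. apply branch_le. intros k Hk. apply rad_le.
  destruct (Nat.le_gt_cases k i); auto. exfalso; apply H, Hk; lia.
Qed.

Lemma branch_refl z : 1 <= branch z z.
Proof.
  apply Rnot_lt_le; intros H. destruct (rad_gt_ex _ H) as [k Hk].
  pose proof (branch_ge z z k ltac:(intros i _; auto)). lra.
Qed.

Lemma Tbar_dist_ge0 z w : 0 <= dT z w.
Proof.
  rewrite Tbar_distE. pose proof (Rmin_l (Rmin (tt z) (tt w)) (branch z w)).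
  pose proof (Rmin_l (tt z) (tt w)). pose proof (Rmin_r (tt z) (tt w)). lra.
Qed.

Lemma Rabs_tt_sub_le z w : Rabs (tt z - tt w) <= dT z w.
Proof.
  rewrite Tbar_distE. pose proof (Rmin_l (Rmin (tt z) (tt w)) (branch z w)).
  pose proof (Rmin_l (tt z) (tt w)). pose proof (Rmin_r (tt z) (tt w)).
  unfold Rabs; destruct Rcase_abs; lra.
Qed.

Lemma Tbar_dist_sym z w : dT z w = dT w z.
Proof. rewrite !Tbar_distE, branch_sym, (Rmin_comm (tt z)). lra. Qed.

Lemma Tbar_dist_triangle x y z : dT x z <= dT x y + dT y z.
Proof.
  rewrite !Tbar_distE. pose proof (branch_ultra x y z).
  unfold Rmin in *; repeat destruct Rle_dec; lra.
Qed.

Lemma Tbar_dist_eq0 z w : dT z w = 0 -> z = w.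
Proof.
  rewrite Tbar_distE; intros H.
  pose proof (Rmin_l (Rmin (tt z) (tt w)) (branch z w)).
  pose proof (Rmin_r (Rmin (tt z) (tt w)) (branch z w)).
  pose proof (Rmin_l (tt z) (tt w)); pose proof (Rmin_r (tt z) (tt w)).
  assert (Ht : tt z = tt w) by lra. assert (Hb : tt z <= branch z w) by lra.
  apply Tbar_ext; auto. intros [|i]; [now rewrite !g_0|].
  destruct (Rlt_le_dec (rad i) (tt z)) as [Hl|Hl].
  - destruct (branch_gt_ex z w (rad i)) as [k [Hk Hik]]; [lra|].
    apply Hk. apply rad_lt_inv in Hik. lia.
  - rewrite (proj2 (g_S_None_iff z i) Hl). symmetry; apply g_S_None_iff; lra.
Qed.

Lemma Tbar_dist_refl z : dT z z = 0.
Proof.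
  rewrite Tbar_distE. pose proof (branch_refl z); pose proof (tt_bounds z).
  rewrite (Rmin_left (tt z)), Rmin_left; lra.
Qed.

Lemma Tbar_is_metric : is_metric dT.
Proof.
  split; [exact Tbar_dist_ge0|]. split; [|split; [exact Tbar_dist_sym|exact Tbar_dist_triangle]].
  intros z w; split; [apply Tbar_dist_eq0|intros ->; apply Tbar_dist_refl].
Qed.

(** * Truncation of geodesics *)

Definition coherent (z w : T) : Prop :=
  forall i, g z i <> None -> g w i <> None -> g z i = g w i.

Lemma coherent_branch z w : coherent z w -> Rmin (tt z) (tt w) <= branch z w.
Proof.
  intros Hc. apply Rnot_lt_le; intros H.
  pose proof (tt_bounds z); pose proof (tt_bounds w).
  pose proof (Rmin_l (tt z) (tt w)); pose proof (Rmin_r (tt z) (tt w)).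
  destruct (rad_gt_ex (branch z w)) as [N HN]; [lra|].
  destruct (switch_point (fun k => branch z w < rad k) N) as [k [Hk1 Hk2]]; auto.
  { rewrite rad_0; pose proof (branch_ge0 z w); lra. }
  apply Rnot_lt_le in Hk1.
  assert (Hag : agree z w (S k)).
  { intros [|j] Hj; [now rewrite !g_0|].
    pose proof (rad_le j k ltac:(lia)).
    destruct (proj2 (g_S_Some_iff z j)) as [v Hv]; [lra|].
    destruct (proj2 (g_S_Some_iff w j)) as [v' Hv']; [lra|].
    apply Hc; congruence. }
  apply branch_ge in Hag. lra.
Qed.

Lemma coherent_dist z w : coherent z w -> dT z w = Rabs (tt z - tt w).
Proof.
  intros Hc. rewrite Tbar_distE, (Rmin_left _ (branch z w)) by (apply coherent_branch; auto).
  unfold Rmin, Rabs; destruct Rle_dec, Rcase_abs; lra.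
Qed.

Definition clamp (z : T) (t : R) : R := Rmax 0 (Rmin t (tt z)).

Lemma clamp_bounds z t : 0 <= clamp z t <= tt z.
Proof. unfold clamp, Rmax, Rmin; pose proof (tt_bounds z); repeat destruct Rle_dec; lra. Qed.

Lemma clamp_id z t : 0 <= t <= tt z -> clamp z t = t.
Proof. unfold clamp, Rmax, Rmin; repeat destruct Rle_dec; lra. Qed.

Lemma clamp_lipschitz z s t : Rabs (clamp z s - clamp z t) <= Rabs (s - t).
Proof.
  unfold clamp, Rmax, Rmin, Rabs; pose proof (tt_bounds z).
  repeat destruct Rle_dec; repeat destruct Rcase_abs; lra.
Qed.

Definition trunc_g (z : T) (c : R) (i : nat) : option V :=
  match i with O => g z O | S j => if Rlt_dec (rad j) c then g z (S j) else None end.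

Lemma trunc_g_Some z c i v : trunc_g z c i = Some v -> g z i = Some v.
Proof. destruct i; simpl; auto. destruct Rlt_dec; congruence. Qed.

(* The point at distance [t] (clamped to [[0, tt z]]) on the geodesic of [z]. *)
Definition trunc (z : T) (t : R) : T.
Proof.
  refine (mkTbar _ _ _ (trunc_g z (clamp z t)) (clamp z t) _ _ _ _ _).
  - pose proof (clamp_bounds z t); pose proof (tt_bounds z); lra.
  - apply g_0.
  - intros i. change (1 - (1/2)^i) with (rad i). cbn [trunc_g].
    pose proof (clamp_bounds z t).
    destruct Rlt_dec as [Hlt|Hlt]; split; try tauto.
    + intros _; apply g_S_Some_iff; lra.
    + intros [v Hv]; discriminate.
  - intros i v Hv; apply trunc_g_Some in Hv; eapply g_level; eauto.
  - intros i u v H1 H2; apply trunc_g_Some in H1, H2; eapply g_adj; eauto.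
Defined.

Lemma tt_trunc z t : tt (trunc z t) = clamp z t.
Proof. reflexivity. Qed.

Lemma g_trunc z t i : g (trunc z t) i = trunc_g z (clamp z t) i.
Proof. reflexivity. Qed.

Lemma trunc_id z t : tt z <= t -> trunc z t = z.
Proof.
  intros H. assert (Hc : clamp z t = tt z).
  { unfold clamp, Rmax, Rmin; pose proof (tt_bounds z); repeat destruct Rle_dec; lra. }
  apply Tbar_ext; [|rewrite tt_trunc; auto].
  intros [|i]; rewrite g_trunc; cbn [trunc_g]; auto. rewrite Hc.
  destruct Rlt_dec; auto. symmetry; apply g_S_None_iff; lra.
Qed.

Lemma trunc_trunc z s t : 0 <= s <= t -> trunc (trunc z t) s = trunc z s.
Proof.
  intros H. assert (Hc : clamp (trunc z t) s = clamp z s).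
  { unfold clamp; rewrite tt_trunc; unfold clamp, Rmax, Rmin; pose proof (tt_bounds z);
    repeat destruct Rle_dec; lra. }
  apply Tbar_ext; [|rewrite !tt_trunc; auto].
  intros [|i]; rewrite !g_trunc; cbn [trunc_g]; auto. rewrite Hc, g_trunc; cbn [trunc_g].
  destruct (Rlt_dec (rad i) (clamp z s)); auto.
  destruct Rlt_dec; auto. exfalso. unfold clamp, Rmax, Rmin in *; repeat destruct Rle_dec; lra.
Qed.

Lemma trunc_prefix z Q : (forall i, g z i <> None -> g z i = g Q i) -> tt z <= tt Q ->
  z = trunc Q (tt z).
Proof.
  intros Hg Hle. pose proof (tt_bounds z).
  apply Tbar_ext; [|rewrite tt_trunc, clamp_id; lra].
  intros [|i]; rewrite g_trunc, clamp_id by lra; cbn [trunc_g]; [now rewrite !g_0|].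
  destruct Rlt_dec as [H'|H'].
  - apply Hg. destruct (proj2 (g_S_Some_iff z i) H') as [v Hv]; congruence.
  - apply g_S_None_iff; lra.
Qed.

Lemma dist_trunc_r z s t : dT (trunc z s) (trunc z t) <= Rabs (s - t).
Proof.
  rewrite coherent_dist; [rewrite !tt_trunc; apply clamp_lipschitz|].
  intros i H1 H2.
  destruct (g (trunc z s) i) eqn:E1, (g (trunc z t) i) eqn:E2; try congruence.
  apply trunc_g_Some in E1, E2. congruence.
Qed.

Lemma agree_trunc z w t k : agree z w k -> agree (trunc z t) (trunc w t) k.
Proof.
  intros Hag [|j] Hj; [now rewrite !g_0|].
  rewrite !g_trunc; cbn [trunc_g]. pose proof (Hag (S j) Hj) as Hz.
  destruct (g z (S j)) eqn:E.
  - assert (H1 : rad j < tt z) by (apply g_S_Some_iff; eauto).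
    assert (H2 : rad j < tt w) by (apply g_S_Some_iff; exists v; congruence).
    destruct (Rlt_dec (rad j) (clamp z t)), (Rlt_dec (rad j) (clamp w t)); auto; exfalso;
      unfold clamp, Rmax, Rmin in *; repeat destruct Rle_dec; lra.
  - destruct Rlt_dec, Rlt_dec; auto.
Qed.

Lemma dist_trunc_l z w t : 0 <= t -> dT (trunc z t) (trunc w t) <= dT z w.
Proof.
  intros Ht. assert (Hb : branch z w <= branch (trunc z t) (trunc w t)).
  { apply branch_le; intros k Hk; apply branch_ge, agree_trunc; auto. }
  pose proof (branch_ge0 z w); pose proof (tt_bounds z); pose proof (tt_bounds w).
  rewrite !Tbar_distE, !tt_trunc. unfold clamp, Rmax, Rmin in *.
  repeat destruct Rle_dec; lra.
Qed.

Definition root : T.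
Proof.
  refine (mkTbar _ _ _ (fun i => match i with O => Some x0 | S _ => None end) 0 _ _ _ _ _).
  - lra.
  - reflexivity.
  - intros i; split; [intros [v Hv]; discriminate|]. pose proof (half_pow_le1 i). lra.
  - intros [|i] v Hv; [|discriminate]. injection Hv as <-. split.
    + exists (fun _ => x0); repeat split; lia.
    + intros; lia.
  - discriminate.
Defined.

Lemma trunc_0 z : trunc z 0 = root.
Proof.
  assert (Hc : clamp z 0 = 0) by (apply clamp_id; pose proof (tt_bounds z); lra).
  apply Tbar_ext; [|rewrite tt_trunc; auto].
  intros [|i]; rewrite g_trunc; cbn [trunc_g]; [apply g_0|].
  rewrite Hc. destruct Rlt_dec; auto. pose proof (rad_ge0 i); lra.
Qed.

Lemma trunc_homotopy_cont (r : R -> R) (c : R) : 0 <= c ->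
  (forall s, 0 <= s <= 1 -> 0 <= r s) ->
  (forall s s', Rabs (r s - r s') <= c * Rabs (s - s')) ->
  homotopy_cont dT dT (fun s x => trunc x (r s)).
Proof.
  intros Hc Hpos Hlip [s x] Hs e He. exists (e / (2 * (c + 1))).
  split; [apply Rdiv_lt_0_compat; lra|].
  intros [s' y] _ Hd. unfold prod_dist in Hd; simpl in *.
  pose proof (Rmax_l (Rabs (s - s')) (dT x y)); pose proof (Rmax_r (Rabs (s - s')) (dT x y)).
  pose proof (Tbar_dist_triangle (trunc x (r s)) (trunc y (r s)) (trunc y (r s'))).
  pose proof (dist_trunc_l x y (r s) (Hpos s Hs)).
  pose proof (dist_trunc_r y (r s) (r s')).
  pose proof (Hlip s s').
  assert (c * Rabs (s - s') <= c * (e / (2 * (c + 1)))) by (apply Rmult_le_compat_l; lra).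
  assert (c * (e / (2 * (c + 1))) + e / (2 * (c + 1)) = e / 2) by (field; lra).
  lra.
Qed.

Lemma Tbar_contractible : contractible dT.
Proof.
  exists root, (fun s x => trunc x (1 - s)). split; [|split].
  - apply (trunc_homotopy_cont (fun s => 1 - s) 1); [lra|intros; lra|].
    intros s s'. replace (1 - s - (1 - s')) with (- (s - s')) by ring. rewrite Rabs_Ropp; lra.
  - intros x. apply trunc_id. pose proof (tt_bounds x); lra.
  - intros x. replace (1 - 1) with 0 by lra. apply trunc_0.
Qed.

Definition is_vertex (j : nat) (Q : T) : Prop := tt Q = rad j.

Lemma is_vertex_root : is_vertex 0 root.
Proof. unfold is_vertex; rewrite rad_0; reflexivity. Qed.

Lemma is_vertex_g j Q i : is_vertex j Q -> (g Q i <> None <-> (i <= j)%nat).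
Proof.
  unfold is_vertex; intros H. destruct i as [|i]; [rewrite g_0; split; [lia|congruence]|].
  split.
  - intros Hn. destruct (g Q (S i)) eqn:E; [|congruence].
    assert (Hlt : rad i < tt Q) by (apply g_S_Some_iff; eauto).
    rewrite H in Hlt. apply rad_lt_inv in Hlt. lia.
  - intros Hle. destruct (proj2 (g_S_Some_iff Q i)) as [v Hv]; [|congruence].
    rewrite H; apply rad_lt; lia.
Qed.

Lemma vertex_on_geodesic z j : (forall i, (i < j)%nat -> rad i < tt z) ->
  exists Q, is_vertex j Q /\ agree Q z j.
Proof.
  intros Hz.
  unshelve eexists (mkTbar _ _ _ (fun i => if le_dec i j then g z i else None) (rad j) _ _ _ _ _).
  - pose proof (rad_ge0 j); pose proof (rad_lt1 j); lra.
  - apply g_0.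
  - intros i. change (1 - (1/2)^i) with (rad i). cbn beta.
    destruct (le_dec (S i) j) as [H|H]; split.
    + intros _; apply rad_lt; lia.
    + intros _; apply g_S_Some_iff, Hz; lia.

    + intros [v Hv]; discriminate.
    + intros H'; apply rad_lt_inv in H'; lia.
  - intros i v; cbn beta; destruct le_dec; [apply g_level|discriminate].
  - intros i u v; cbn beta; destruct le_dec, le_dec; try discriminate; apply g_adj.
  - split; [reflexivity|]. intros i Hi; simpl. destruct le_dec; [reflexivity|lia].
Qed.

Lemma vertex_unique j Q Q' : is_vertex j Q -> is_vertex j Q' -> agree Q Q' j -> Q = Q'.
Proof.
  intros H1 H2 Hag. apply Tbar_ext; [|unfold is_vertex in *; congruence].
  intros i. destruct (le_dec i j) as [|Hij]; [apply Hag; auto|].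
  destruct (g Q i) eqn:E1; [exfalso; apply Hij, (is_vertex_g j Q i H1); congruence|].
  destruct (g Q' i) eqn:E2; auto. exfalso; apply Hij, (is_vertex_g j Q' i H2); congruence.
Qed.

Lemma eq_trunc_of_agree z Q j : agree z Q j -> tt z <= rad j -> tt z <= tt Q ->
  z = trunc Q (tt z).
Proof.
  intros Hag Hj HQ. apply trunc_prefix; auto. intros [|i] Hi; [now rewrite !g_0|]. apply Hag.
  destruct (g z (S i)) eqn:E; [|congruence].
  pose proof (proj1 (g_S_Some_iff z i) (ex_intro _ _ E)) as Hlt.
  change (i < j)%nat. apply rad_lt_inv; lra.
Qed.

Section LocallyFinite.
Hypothesis LF : locally_finite adj.

Lemma children_finite j P : exists l, forall Q, is_vertex (S j) Q -> agree Q P j -> In Q l.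
Proof.
  destruct (g P j) as [v|] eqn:EP.
  2:{ exists nil. intros Q HQ Hag. apply (is_vertex_g (S j) Q j HQ); [lia|].
      rewrite (Hag j (le_n j)); auto. }
  assert (Hgen : forall ws, exists l, forall Q, is_vertex (S j) Q -> agree Q P j ->
            (exists w, g Q (S j) = Some w /\ In w ws) -> In Q l).
  { induction ws as [|w ws [l Hl]]; [exists nil; intros Q _ _ [w [_ []]]|].
    destruct (classic (exists Q0, is_vertex (S j) Q0 /\ agree Q0 P j /\ g Q0 (S j) = Some w))
      as [[Q0 [H1 [H2 H3]]]|Hn].
    - exists (Q0 :: l). intros Q HQ Hag [w' [Hw' [<-|Hin]]]; [left|right; eauto].
      apply vertex_unique with (S j); auto. intros i Hi.
      destruct (le_lt_dec i j); [rewrite H2, Hag; auto|].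
      replace i with (S j) by lia; congruence.
    - exists l. intros Q HQ Hag [w' [Hw' [<-|Hin]]]; [exfalso; apply Hn; eauto|eauto]. }
  destruct (LF v) as [nb Hnb]. destruct (Hgen nb) as [l Hl]. exists l.
  intros Q HQ Hag. apply Hl; auto.
  destruct (g Q (S j)) as [w|] eqn:E.
  - exists w; split; auto. apply Hnb. eapply g_adj; [|exact E]. rewrite Hag; auto.
  - exfalso. apply (proj2 (is_vertex_g (S j) Q (S j) HQ)); auto.
Qed.

Lemma level_finite j : exists l, forall Q, is_vertex j Q -> In Q l.
Proof.
  induction j as [|j [l Hl]].
  - exists (root :: nil). intros Q HQ. left.
    apply vertex_unique with 0%nat; auto using is_vertex_root, agree0.
  - assert (Hgen : forall l0, exists l', forall Q, is_vertex (S j) Q ->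
              (exists P, In P l0 /\ agree Q P j) -> In Q l').
    { induction l0 as [|P l0 [l1 H1]]; [exists nil; intros Q _ [P [[] _]]|].
      destruct (children_finite j P) as [l2 H2].
      exists (l2 ++ l1). intros Q HQ [P' [[<-|Hin] Hag]]; apply in_or_app; eauto. }
    destruct (Hgen l) as [l' Hl']. exists l'. intros Q HQ. apply Hl'; auto.
    destruct (vertex_on_geodesic Q j) as [P [HP Hag]].
    { intros i Hi. unfold is_vertex in HQ; rewrite HQ. apply rad_lt; lia. }
    exists P; split; auto. apply agree_sym; auto.
Qed.

Lemma vertices_upto_finite m : exists L : list (nat * T),
  (forall j Q, In (j, Q) L -> is_vertex j Q /\ (j <= m)%nat) /\
  (forall j Q, (j <= m)%nat -> is_vertex j Q -> In (j, Q) L).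
Proof.
  induction m as [|m [L [H1 H2]]].
  - exists ((0%nat, root) :: nil). split.
    + intros j Q [E|[]]. injection E as <- <-. auto using is_vertex_root.
    + intros j Q Hj HQ. replace j with 0%nat in * by lia. left. f_equal.
      apply vertex_unique with 0%nat; auto using is_vertex_root, agree0.
  - destruct (level_finite (S m)) as [l Hl].
    set (keep := fun Q => if excluded_middle_informative (is_vertex (S m) Q) then true else false).
    exists (L ++ map (fun Q => (S m, Q)) (filter keep l)). split.
    + intros j Q Hin. apply in_app_or in Hin as [Hin|Hin]; [destruct (H1 j Q Hin); auto|].
      apply in_map_iff in Hin as [Q' [E Hin]]. injection E as <- <-.
      apply filter_In in Hin as [_ Hk]. unfold keep in Hk.
      destruct excluded_middle_informative; [auto|discriminate].
    + intros j Q Hj HQ. apply in_or_app. destruct (le_lt_dec j m); [left; auto|right].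
      replace j with (S m) in * by lia. apply in_map_iff. exists Q; split; auto.
      apply filter_In; split; auto. unfold keep; destruct excluded_middle_informative; tauto.
Qed.

End LocallyFinite.

(** * Compactness *)

Definition cone (j : nat) (Q : T) (z : T) : Prop :=
  (forall i, (i < j)%nat -> rad i < tt z) /\ agree z Q j.

Lemma cone_cases j Q z : is_vertex j Q -> cone j Q z ->
  (exists t, 0 <= t <= rad j /\ z = trunc Q t) \/
  (exists Q', is_vertex (S j) Q' /\ agree Q' Q j /\ cone (S j) Q' z).
Proof.
  intros HQ [Hz Hag]. pose proof (tt_bounds z).
  destruct (Rle_lt_dec (tt z) (rad j)) as [Hle|Hlt].
  - left. exists (tt z). split; [lra|].
    apply eq_trunc_of_agree with j; auto. unfold is_vertex in HQ; lra.
  - right. assert (Hz' : forall i, (i < S j)%nat -> rad i < tt z).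
    { intros i Hi. pose proof (rad_le i j ltac:(lia)); lra. }
    destruct (vertex_on_geodesic z (S j) Hz') as [Q' [HQ' Hag']].
    exists Q'; repeat split; auto.
    + apply agree_trans with z; [apply agree_le with (S j)|]; auto.
    + apply agree_sym; auto.
Qed.

Definition ray (f : nat -> T) (Hv : forall j, is_vertex j (f j))
  (Hag : forall j, agree (f (S j)) (f j) j) : T.
Proof.
  refine (mkTbar _ _ _ (fun i => g (f i) i) 1 _ _ _ _ _).
  - lra.
  - apply g_0.
  - intros i. change (1 - (1/2)^i) with (rad i). split; intros _; [apply rad_lt1|].
    destruct (g (f (S i)) (S i)) eqn:E; eauto. exfalso.
    exact (proj2 (is_vertex_g (S i) (f (S i)) (S i) (Hv (S i))) (le_n _) E).
  - intros i v Hgi; eapply g_level; eauto.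
  - intros i u v Hu Hw. eapply (g_adj _ _ (f (S i))); [|exact Hw].
    rewrite (Hag i i (le_n i)); exact Hu.
Defined.

Lemma ray_agree f Hv Hag j : agree (f j) (ray f Hv Hag) j.
Proof.
  assert (Hd : forall d i, g (f (d + i)%nat) i = g (f i) i).
  { induction d as [|d IH]; intros i; auto. simpl. rewrite (Hag (d + i)%nat i) by lia. auto. }
  intros i Hi. simpl. replace j with ((j - i) + i)%nat by lia. apply Hd.
Qed.

Section Compactness.
Variables (I : Type) (U : I -> T -> Prop).
Hypothesis U_open : forall i, is_open dT (U i).
Hypothesis U_cover : forall x, exists i, U i x.

Definition fin_covered (A : T -> Prop) : Prop :=
  exists l : list I, forall z, A z -> exists i, In i l /\ U i z.

Lemma fin_covered_union A B : fin_covered A -> fin_covered B ->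
  fin_covered (fun z => A z \/ B z).
Proof.
  intros [l1 H1] [l2 H2]. exists (l1 ++ l2). intros z [Hz|Hz];
    [destruct (H1 z Hz) as [i [Hi Hu]]|destruct (H2 z Hz) as [i [Hi Hu]]];
    exists i; split; auto; apply in_or_app; auto.
Qed.

Lemma fin_covered_sub (A B : T -> Prop) : (forall z, A z -> B z) -> fin_covered B -> fin_covered A.
Proof. intros H [l Hl]. exists l; auto. Qed.

(* Real induction: the [s] for which [f] maps [[a, s]] into finitely many [U i] reach
   their supremum [m], and [m = b], since [f] maps a neighbourhood of [m] into one [U i]. *)
Lemma path_fin_covered (f : R -> T) a b : (forall s t, dT (f s) (f t) <= Rabs (s - t)) ->
  fin_covered (fun z => exists t, a <= t <= b /\ z = f t).
Proof.
  intros Hf. destruct (Rle_lt_dec a b) as [Hab|Hab]; [|exists nil; intros z [t [Ht _]]; lra].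
  set (E := fun s => a <= s <= b /\ fin_covered (fun z => exists t, a <= t <= s /\ z = f t)).
  assert (Ea : E a).
  { split; [lra|]. destruct (U_cover (f a)) as [i Hi]. exists (i :: nil). intros z [t [Ht ->]].
    exists i; split; [left; auto|]. replace t with a by lra. auto. }
  destruct (completeness E) as [m [Hub Hlub]]; [exists b; intros s [Hs _]; lra|eauto|].
  assert (Ham : a <= m) by (apply Hub; auto).
  assert (Hmb : m <= b) by (apply Hlub; intros s [Hs _]; lra).
  destruct (U_cover (f m)) as [i0 Hi0]. destruct (U_open i0 (f m) Hi0) as [e [He HU]].
  assert (Hs : exists s, E s /\ m - e < s).
  { apply NNPP; intros Hn. assert (m <= m - e); [|lra]. apply Hlub. intros s Es.
    apply Rnot_lt_le; intros Hlt; apply Hn; eauto. }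
  destruct Hs as [s [[Hs1 [l Hl]] Hs2]].
  assert (Hsm : s <= m) by (apply Hub; split; [|exists l]; auto).
  set (s' := Rmin b (m + e/2)).
  assert (Es' : E s').
  { split; [unfold s', Rmin; destruct Rle_dec; lra|].
    exists (i0 :: l). intros z [t [Ht ->]]. destruct (Rle_lt_dec t s) as [Hts|Hts].
    - destruct (Hl (f t)) as [i [Hin Hi]]; [exists t; split; [lra|auto]|].
      exists i; split; [right|]; auto.
    - exists i0; split; [left; auto|]. apply HU. eapply Rle_lt_trans; [apply Hf|].
      unfold s', Rmin, Rabs in *; destruct Rle_dec, Rcase_abs; lra. }
  assert (Hs'm : s' <= m) by (apply Hub; auto).
  replace b with s' by (unfold s', Rmin in *; destruct Rle_dec; lra). apply Es'.
Qed.

Section LocallyFiniteCompact.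
Hypothesis LF : locally_finite adj.

Lemma uncovered_child j Q : is_vertex j Q -> ~ fin_covered (cone j Q) ->
  exists Q', is_vertex (S j) Q' /\ agree Q' Q j /\ ~ fin_covered (cone (S j) Q').
Proof.
  intros HQ Hbad. apply NNPP; intro Hn. apply Hbad.
  destruct (children_finite LF j Q) as [l Hl].
  set (cones := fun l0 z => exists Q', In Q' l0 /\ is_vertex (S j) Q' /\ agree Q' Q j /\
                                     cone (S j) Q' z).
  assert (Hcones : forall l0, fin_covered (cones l0)).
  { induction l0 as [|P l0 IH]; [exists nil; intros z [Q' [[] _]]|].
    destruct (classic (is_vertex (S j) P /\ agree P Q j)) as [[H1 H2]|Hc].
    - assert (Hg : fin_covered (cone (S j) P)) by (apply NNPP; intro; apply Hn; eauto).
      eapply fin_covered_sub; [|apply (fin_covered_union _ _ Hg IH)].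
      intros z [Q' [[<-|Hin] HQ']]; [left|right; exists Q']; tauto.
    - eapply fin_covered_sub; [|apply IH].
      intros z [Q' [[<-|Hin] HQ']]; [tauto|exists Q'; auto]. }
  eapply fin_covered_sub;
    [|apply (fin_covered_union _ _ (path_fin_covered (trunc Q) 0 (rad j) (dist_trunc_r Q))
                                 (Hcones l))].
  intros z Hz. destruct (cone_cases j Q z HQ Hz) as [H|[Q' [H1 [H2 H3]]]];
    [left; auto|right; exists Q'; auto].
Qed.

Definition uncovered_child_of (j : nat) (Q : T) : T :=
  epsilon (inhabits root)
    (fun Q' => is_vertex (S j) Q' /\ agree Q' Q j /\ ~ fin_covered (cone (S j) Q')).

Fixpoint uncovered_branch (j : nat) : T :=
  match j with O => root | S j' => uncovered_child_of j' (uncovered_branch j') end.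

Lemma uncovered_branch_spec : ~ fin_covered (cone 0 root) -> forall j,
  is_vertex j (uncovered_branch j) /\ ~ fin_covered (cone j (uncovered_branch j)) /\
  agree (uncovered_branch (S j)) (uncovered_branch j) j.
Proof.
  intros Hbad j.
  assert (H : forall n, is_vertex n (uncovered_branch n) /\
                        ~ fin_covered (cone n (uncovered_branch n))).
  { induction n as [|n [IH1 IH2]]; [split; [apply is_vertex_root|auto]|].
    destruct (epsilon_spec (inhabits root) _ (uncovered_child n _ IH1 IH2)) as [H1 [_ H3]].
    split; auto. }
  destruct (H j) as [H1 H2]. split; [|split]; auto.
  apply (epsilon_spec (inhabits root) _ (uncovered_child j _ H1 H2)).
Qed.

Lemma cone_root_fin_covered : fin_covered (cone 0 root).
Proof.
  apply NNPP; intros Hbad. pose proof (uncovered_branch_spec Hbad) as Hb.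
  set (xi := ray uncovered_branch (fun j => proj1 (Hb j)) (fun j => proj2 (proj2 (Hb j)))).
  destruct (U_cover xi) as [i0 Hi0]. destruct (U_open i0 xi Hi0) as [e [He HU]].
  destruct (half_pow_lt_ex (e/2)) as [j Hj]; [lra|].
  apply (proj1 (proj2 (Hb (S j)))). exists (i0 :: nil). intros z [Hz Hag].
  exists i0; split; [left; auto|]. apply HU.
  assert (Hzx : agree z xi (S j)) by (apply agree_trans with (uncovered_branch (S j)); auto;
                                       apply ray_agree).
  apply branch_ge in Hzx. rewrite branch_sym in Hzx.
  assert (Htz : rad j < tt z) by (apply Hz; lia).
  pose proof (rad_le j (S j) ltac:(lia)). pose proof (tt_bounds z).
  rewrite Tbar_distE. change (tt xi) with 1. unfold rad in *.
  unfold Rmin; repeat destruct Rle_dec; lra.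
Qed.

End LocallyFiniteCompact.
End Compactness.

Lemma Tbar_compact : locally_finite adj -> is_compact dT.
Proof.
  intros LF I U U_open U_cover.
  destruct (cone_root_fin_covered I U U_open U_cover LF) as [l Hl].
  exists l. intros x. apply Hl. split; [intros; lia|apply agree0].
Qed.

(** * The transfer complex *)

Section Transfer.
Variable m : nat.
Variable L : list (nat * T).
Hypothesis L_vertex : forall j Q, In (j, Q) L -> is_vertex j Q /\ (j <= m)%nat.
Hypothesis L_complete : forall j Q, (j <= m)%nat -> is_vertex j Q -> In (j, Q) L.

Definition nK : nat := length L.
Definition vert (k : nat) : nat * T := nth k L (0%nat, root).
Definition vlevel (k : nat) : nat := fst (vert k).
Definition vpoint (k : nat) : T := snd (vert k).

Lemma vert_eq k : vert k = (vlevel k, vpoint k).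
Proof. apply surjective_pairing. Qed.

Lemma vert_is_vertex k : (k < nK)%nat -> is_vertex (vlevel k) (vpoint k) /\ (vlevel k <= m)%nat.
Proof. intros Hk. apply L_vertex. rewrite <- vert_eq. apply nth_In; auto. Qed.

Lemma tt_vpoint k : (k < nK)%nat -> tt (vpoint k) = rad (vlevel k).
Proof. apply vert_is_vertex. Qed.

Definition vindex (p : nat * T) : nat :=
  epsilon (inhabits 0%nat) (fun k => (k < nK)%nat /\ vert k = p).

Lemma vindex_spec p : In p L -> (vindex p < nK)%nat /\ vert (vindex p) = p.
Proof.
  intros H. unfold vindex. apply epsilon_spec.
  destruct (In_nth L p (0%nat, root) H) as [k [Hk E]]. exists k; split; auto.
Qed.

Definition edge (a c : nat) : Prop :=
  (a < nK)%nat /\ (c < nK)%nat /\ vlevel c = S (vlevel a) /\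
  agree (vpoint c) (vpoint a) (vlevel a).

Definition simplex (s : list nat) : Prop :=
  (exists a, (a < nK)%nat /\ s = a :: nil) \/
  (exists a c, edge a c /\ (s = a :: c :: nil \/ s = c :: a :: nil)).

Lemma simplex_wf s : simplex s ->
  s <> nil /\ NoDup s /\ (forall j, In j s -> (j < nK)%nat) /\ (length s <= 2)%nat.
Proof.
  intros [[a [Ha ->]]|[a [c [[Ha [Hc [Hl _]]] Hs]]]].
  - repeat split; [congruence|repeat constructor; simpl; tauto| |simpl; lia].
    intros j [<-|[]]; auto.
  - assert (a <> c) by (intros ->; lia).
    destruct Hs as [->| ->]; (repeat split; [congruence| |intros j [<-|[<-|[]]]; auto|simpl; lia]);
      repeat constructor; simpl; intuition.
Qed.

Lemma simplex_face s s' : simplex s -> s' <> nil -> NoDup s' -> incl s' s -> simplex s'.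
Proof.
  intros [[a [Ha ->]]|[a [c [He Hs]]]] Hn Hnd Hi.
  - left; exists a; split; auto.
    destruct s' as [|x [|y s']]; [contradiction| |].
    + destruct (Hi x (or_introl eq_refl)) as [<-|[]]; auto.
    + apply NoDup_cons_iff in Hnd as [Hx _]. exfalso; apply Hx.
      destruct (Hi x (or_introl eq_refl)) as [<-|[]].
      destruct (Hi y (or_intror (or_introl eq_refl))) as [<-|[]]. left; auto.
  - assert (Hi' : incl s' (a :: c :: nil)).
    { intros x Hx. destruct Hs as [-> | ->]; destruct (Hi x Hx) as [<-|[<-|[]]]; simpl; auto. }
    destruct He as [Ha [Hc He']].
    destruct (incl_pair_cases a c s' Hn Hnd Hi') as [->|[->|[->| ->]]];
      [left; exists a|left; exists c|right; exists a, c|right; exists a, c]; repeat split; tauto.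
Qed.

Lemma simplex_complex : simplicial_complex_dim_le nK simplex 1.
Proof.
  split; [intros s Hs; exact (simplex_wf s Hs)|split; [exact simplex_face|]].
  intros j Hj. left; exists j; auto.
Qed.

Definition retract (x : T) : T := trunc x (rad m).

Lemma tt_retract x : 0 <= tt (retract x) <= rad m.
Proof.
  unfold retract; rewrite tt_trunc. pose proof (clamp_bounds x (rad m)).
  unfold clamp, Rmax, Rmin in *; pose proof (rad_ge0 m); repeat destruct Rle_dec; lra.
Qed.


Definition height (b : nat -> R) : R := sumR (map (fun k => b k * tt (vpoint k)) (seq 0 nK)).

Definition carrier (b : nat -> R) : list nat :=
  epsilon (inhabits nil) (fun s => simplex s /\ forall j, b j <> 0 -> In j s).

Definition deepest (s : list nat) : nat :=
  match s with
  | a :: c :: _ => if lt_dec (vlevel a) (vlevel c) then c else a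
  | a :: nil => a
  | nil => 0%nat
  end.

Definition proj (b : nat -> R) : T := trunc (vpoint (deepest (carrier b))) (height b).

Lemma carrier_spec b : in_realization nK simplex b ->
  simplex (carrier b) /\ forall j, b j <> 0 -> In j (carrier b).
Proof. intros [_ [_ [_ H]]]. unfold carrier. apply epsilon_spec; auto. Qed.

Lemma vpoint_trunc_deepest s u : simplex s -> In u s ->
  vpoint u = trunc (vpoint (deepest s)) (tt (vpoint u)).
Proof.
  intros [[a [Ha ->]]|[a [c [[Ha [Hc [Hl Hag]]] Hs]]]] Hu.
  - destruct Hu as [<-|[]]. symmetry; apply trunc_id; simpl; lra.
  - assert (Hd : deepest s = c) by (destruct Hs as [-> | ->]; simpl; destruct lt_dec; lia).
    assert (Hu' : u = a \/ u = c) by (destruct Hs as [-> | ->]; simpl in Hu; intuition).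
    rewrite Hd. destruct Hu' as [-> | ->]; [|symmetry; apply trunc_id; lra].
    apply eq_trunc_of_agree with (vlevel a); [apply agree_sym; auto|rewrite tt_vpoint; auto; lra|].
    rewrite !tt_vpoint, Hl by auto. apply rad_le; lia.
Qed.

Lemma height_ge0 b : (forall k, 0 <= b k) -> 0 <= height b.
Proof. intros H. apply sumR_map_ge0. intros k. apply Rmult_le_pos; auto. apply tt_bounds. Qed.

Lemma proj_eq b u : in_realization nK simplex b -> b u <> 0 -> height b <= tt (vpoint u) ->
  proj b = trunc (vpoint u) (height b).
Proof.
  intros Hb Hbu Ht. destruct (carrier_spec b Hb) as [Hs Hin].
  unfold proj. rewrite (vpoint_trunc_deepest _ u Hs (Hin u Hbu)).
  rewrite trunc_trunc; auto. split; auto. apply height_ge0, Hb.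
Qed.

Lemma height_le b M : (forall k, b k <> 0 -> tt (vpoint k) <= M) -> (forall k, 0 <= b k) ->
  sumR (map b (seq 0 nK)) = 1 -> height b <= M.
Proof.
  intros H1 H2 H3. unfold height.
  apply Rle_trans with (sumR (map (fun k => b k * M) (seq 0 nK))).
  - apply sumR_map_le. intros k _. destruct (Req_dec (b k) 0) as [E|E].
    + rewrite E; lra.
    + apply Rmult_le_compat_l; auto.
  - rewrite sumR_map_mulr, H3; lra.
Qed.

Lemma height_le_support b : in_realization nK simplex b ->
  exists u, (u < nK)%nat /\ b u <> 0 /\ height b <= tt (vpoint u).
Proof.
  intros Hb. pose proof Hb as [Hpos [_ [Hsum _]]]. destruct (carrier_spec b Hb) as [Hs Hin].
  destruct (sumR_map_neq0 b 0 nK) as [k0 [_ Hk0]]; [lra|].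
  destruct Hs as [[a [Ha Hsa]]|[a [c [[Ha [Hc [Hl _]]] Hs]]]].
  - assert (Hsup : forall k, b k <> 0 -> k = a).
    { intros k Hk. pose proof (Hin k Hk) as H. rewrite Hsa in H. destruct H as [<-|[]]; auto. }
    exists a. split; [auto|split; [rewrite <- (Hsup k0 Hk0); auto|]].
    apply height_le; auto. intros k Hk. rewrite (Hsup k Hk); lra.
  - assert (Hsup : forall k, b k <> 0 -> k = a \/ k = c).
    { intros k Hk. pose proof (Hin k Hk) as H. destruct Hs as [E|E]; rewrite E in H; simpl in H;
        intuition. }
    assert (Hac : tt (vpoint a) <= tt (vpoint c)) by (rewrite !tt_vpoint, Hl by auto;
                                                      apply rad_le; lia).
    destruct (Req_dec (b c) 0) as [Ec|Ec].
    + exists a. split; [auto|split].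
      * destruct (Hsup k0 Hk0) as [<-|<-]; auto; contradiction.
      * apply height_le; auto. intros k Hk. destruct (Hsup k Hk) as [->| ->]; [lra|contradiction].
    + exists c. split; [auto|split; auto]. apply height_le; auto.
      intros k Hk. destruct (Hsup k Hk) as [->| ->]; lra.
Qed.
(* [L] may list a vertex several times: only its index [vindex] gets a coordinate. *)
Definition carries (k : nat) (x : T) : Prop :=
  (k < nK)%nat /\ k = vindex (vert k) /\ agree (retract x) (vpoint k) (vlevel k).

Definition bary (x : T) (k : nat) : R :=
  if excluded_middle_informative (carries k x) then tent (vlevel k) (tt (retract x)) else 0.

Lemma bary_ge0 x k : 0 <= bary x k.
Proof. unfold bary; destruct excluded_middle_informative; [apply tent_ge0|lra]. Qed.

Lemma bary_out x k : (nK <= k)%nat -> bary x k = 0.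
Proof. intros H. unfold bary; destruct excluded_middle_informative as [[Hk _]|]; [lia|auto]. Qed.

Lemma bary_vindex x j Q : In (j, Q) L -> agree Q (retract x) j ->
  bary x (vindex (j, Q)) = tent j (tt (retract x)).
Proof.
  intros Hin Hag. destruct (vindex_spec _ Hin) as [Hlt Hv].
  unfold bary. destruct excluded_middle_informative as [_|Hn].
  - unfold vlevel; rewrite Hv; reflexivity.
  - exfalso; apply Hn. unfold carries, vlevel, vpoint. rewrite Hv. repeat split; auto.
    apply agree_sym; auto.
Qed.

Lemma bary_neq0 x k : bary x k <> 0 -> exists j Q,
  k = vindex (j, Q) /\ is_vertex j Q /\ agree Q (retract x) j /\ tent j (tt (retract x)) <> 0.
Proof.
  unfold bary; destruct excluded_middle_informative as [[Hk [Hi Hag]]|]; [|congruence].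
  intros Hh. exists (vlevel k), (vpoint k). rewrite <- vert_eq.
  repeat split; auto; [apply vert_is_vertex; auto|apply agree_sym; auto].
Qed.

Lemma bary_vertex_case x j : tt (retract x) = rad j -> (j <= m)%nat ->
  exists u, (u < nK)%nat /\ (forall k, k <> u -> bary x k = 0) /\ bary x u = 1 /\
    vpoint u = retract x.
Proof.
  intros Ht Hj. assert (HV : is_vertex j (retract x)) by exact Ht.
  pose proof (L_complete j _ Hj HV) as Hin. destruct (vindex_spec _ Hin) as [Hu Hvu].
  exists (vindex (j, retract x)). split; [|split; [|split]]; auto.
  - intros k Hk. apply NNPP; intros Hnz. apply Hk.
    destruct (bary_neq0 x k Hnz) as [l [Q [-> [HQ [Hag Hh]]]]].
    destruct (tent_neq0_level l j (tt (retract x))) as [->| ->]; auto.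
    + rewrite Ht; split; [lra|apply rad_lt; lia].
    + f_equal; f_equal. apply vertex_unique with j; auto.
    + exfalso; apply Hh, tent_eq0_le. cbn [tent_lo]; lra.
  - rewrite bary_vindex, Ht; auto using tent_rad. intros i _; auto.
  - unfold vpoint; rewrite Hvu; reflexivity.
Qed.

Lemma bary_edge_case x j : rad j < tt (retract x) < rad (S j) -> (j < m)%nat ->
  exists a c, edge a c /\ vlevel a = j /\ (forall k, k <> a -> k <> c -> bary x k = 0) /\
    bary x a = tent j (tt (retract x)) /\ bary x c = tent (S j) (tt (retract x)) /\
    agree (vpoint c) (retract x) (S j).
Proof.
  intros Ht Hj. set (t := tt (retract x)) in *.
  destruct (vertex_on_geodesic (retract x) j) as [P [HP HagP]].
  { intros i Hi. pose proof (rad_lt i j Hi); fold t; lra. }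
  destruct (vertex_on_geodesic (retract x) (S j)) as [Q [HQ HagQ]].
  { intros i Hi. pose proof (rad_le i j ltac:(lia)); fold t; lra. }
  assert (HinP : In (j, P) L) by (apply L_complete; auto; lia).
  assert (HinQ : In (S j, Q) L) by (apply L_complete; auto; lia).
  destruct (vindex_spec _ HinP) as [Ha Hva]. destruct (vindex_spec _ HinQ) as [Hc Hvc].
  exists (vindex (j, P)), (vindex (S j, Q)). unfold edge, vlevel, vpoint.
  rewrite Hva, Hvc; simpl. repeat split; auto.
  - apply agree_trans with (retract x); [apply agree_le with (S j)|apply agree_sym]; auto.
  - intros k Hka Hkc. apply NNPP; intros Hnz.
    destruct (bary_neq0 x k Hnz) as [l [Q' [-> [HQ' [Hag Hh]]]]].
    destruct (tent_neq0_level l j t) as [->| ->]; auto; [lra|apply Hka|apply Hkc];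
      do 2 f_equal; eapply vertex_unique; eauto; eapply agree_trans; eauto; apply agree_sym; auto.
  - apply bary_vindex; auto.
  - apply bary_vindex; auto.
Qed.
Lemma bary_spec_vertex x j : tt (retract x) = rad j -> (j <= m)%nat ->
  in_realization nK simplex (bary x) /\ proj (bary x) = retract x.
Proof.
  intros Ht Hj. destruct (bary_vertex_case x j Ht Hj) as [u [Hu [Hoff [Hbu Hpu]]]].
  assert (Hsum : forall f, (forall k, k <> u -> f k = 0) -> sumR (map f (seq 0 nK)) = f u)
    by (intros f Hf; apply sumR_map_single; auto; lia).
  assert (Hh : height (bary x) = tt (retract x)).
  { unfold height. rewrite Hsum, Hbu, Hpu; [ring|]. intros k Hk; rewrite Hoff; auto; ring. }
  assert (Hr : in_realization nK simplex (bary x)).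
  { repeat split; [apply bary_ge0|apply bary_out|rewrite Hsum; auto|].
    exists (u :: nil). split; [left; exists u; auto|].
    intros k Hk. left. apply NNPP; intros Hn; apply Hk, Hoff; auto. }
  split; auto. rewrite (proj_eq _ u Hr), Hh, Hpu;
    [apply trunc_id; lra|rewrite Hbu; apply R1_neq_R0|rewrite Hh, Hpu; lra].
Qed.

Lemma bary_spec_edge x j : rad j < tt (retract x) < rad (S j) -> (j < m)%nat ->
  in_realization nK simplex (bary x) /\ proj (bary x) = retract x.
Proof.
  intros Ht Hj. set (t := tt (retract x)) in *.
  destruct (bary_edge_case x j Ht Hj) as [a [c [He [Hla [Hoff [Hba [Hbc Hag]]]]]]].
  pose proof He as [Ha [Hc [Hlc _]]]. fold t in Hba, Hbc.
  assert (Hac : a <> c) by (intros ->; lia).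
  assert (Hsum : forall f, (forall k, k <> a -> k <> c -> f k = 0) ->
                           sumR (map f (seq 0 nK)) = f a + f c)
    by (intros f Hf; apply sumR_map_pair; auto; lia).
  assert (Htc : tt (vpoint c) = rad (S j)) by (rewrite tt_vpoint, Hlc, Hla; auto).
  assert (Hh : height (bary x) = t).
  { unfold height. rewrite Hsum, Hba, Hbc, Htc, tt_vpoint, Hla by
      (auto; intros k Hka Hkc; rewrite Hoff; auto; ring).
    apply tent_barycenter; lra. }
  assert (Hr : in_realization nK simplex (bary x)).
  { repeat split; [apply bary_ge0|apply bary_out|rewrite Hsum, Hba, Hbc; auto|].
    - apply tent_partition; lra.
    - exists (a :: c :: nil). split; [right; exists a, c; auto|].
      intros k Hk. destruct (Nat.eq_dec k a); [left; auto|right; left].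
      apply NNPP; intros Hn; apply Hk, Hoff; auto. }
  pose proof (tent_S_pos j t ltac:(lra)).
  split; auto. rewrite (proj_eq _ c Hr), Hh; [|rewrite Hbc; lra|rewrite Hh, Htc; lra].
  symmetry. apply eq_trunc_of_agree with (S j); [apply agree_sym; auto|fold t; lra|].
  rewrite Htc; fold t; lra.
Qed.

Lemma bary_spec x : in_realization nK simplex (bary x) /\ proj (bary x) = retract x.
Proof.
  pose proof (tt_retract x) as Ht.
  destruct (rad_bracket m _ Ht) as [j [Hjm [Hj1 Hj2]]].
  destruct (Req_dec (tt (retract x)) (rad j)) as [Htj|Htj].
  - apply bary_spec_vertex with j; auto.
  - apply bary_spec_edge with j; [lra|apply rad_lt_inv; lra].
Qed.

Lemma height_lipschitz b b' : Rabs (height b - height b') <= real_dist nK b b'.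
Proof.
  unfold height, real_dist. eapply Rle_trans; [apply Rabs_sumR_map_sub|].
  apply sumR_map_le. intros k _. pose proof (tt_bounds (vpoint k)).
  replace (b k * tt (vpoint k) - b' k * tt (vpoint k)) with ((b k - b' k) * tt (vpoint k)) by ring.
  rewrite Rabs_mult, (Rabs_pos_eq (tt (vpoint k))) by lra.
  pose proof (Rabs_pos (b k - b' k)). nra.
Qed.

(* Near [b], every [b'] of [|K|] charges the vertex [u] of [height_le_support], so [proj b']
   lies on the geodesic of [vpoint u], as does [proj b]. *)
Lemma proj_cont : cont_on (real_dist nK) (in_realization nK simplex) dT proj.
Proof.
  intros b Hb e He. destruct (height_le_support b Hb) as [u [Hu [Hbu Htu]]].
  assert (Hbu' : 0 < b u) by (destruct Hb as [Hpos _]; pose proof (Hpos u); lra).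
  exists (Rmin (b u) e). split; [apply Rmin_pos; auto|].
  intros b' Hb' Hd.
  assert (Hd1 : Rabs (b u - b' u) <= real_dist nK b b').
  { apply (sumR_map_term_le (fun j => Rabs (b j - b' j)) 0 nK u); [intros; apply Rabs_pos|lia]. }
  pose proof (Rmin_l (b u) e). pose proof (Rmin_r (b u) e).
  assert (Hb'u : b' u <> 0) by (intros E; rewrite E, Rminus_0_r, Rabs_pos_eq in Hd1; lra).
  destruct (carrier_spec b' Hb') as [Hs' Hin'].
  rewrite (proj_eq b u Hb Hbu Htu).
  unfold proj at 1. rewrite (vpoint_trunc_deepest (carrier b') u Hs' (Hin' u Hb'u)).
  rewrite trunc_trunc by (split; auto; apply height_ge0, Hb).
  eapply Rle_lt_trans; [apply dist_trunc_r|].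
  eapply Rle_lt_trans; [apply height_lipschitz|]. lra.
Qed.

Definition slope_max : R := 2 ^ (S m).

Lemma slope_max_pos : 0 < slope_max.
Proof. apply pow_lt; lra. Qed.

Lemma slope_le_max j : (j <= m)%nat -> slope_l j <= slope_max /\ slope_r j <= slope_max.
Proof.
  intros Hj. assert (Hr : forall i, (i <= m)%nat -> slope_r i <= slope_max)
    by (intros i Hi; apply Rle_pow; [lra|lia]).
  split; [destruct j as [|j]; [apply pow_R1_Rle; lra|apply Hr; lia]|apply Hr; lia].
Qed.

Lemma retract_lipschitz x y : dT (retract x) (retract y) <= dT x y.
Proof. apply dist_trunc_l, rad_ge0. Qed.

(* If [k] carries [x] but not [y], the geodesics of [retract x] and [retract y] part before
   level [vlevel k], so [retract x] is within [dT x y] of the lower end of the tent. *)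
Lemma bary_le_carries x y k : carries k x -> ~ carries k y -> bary x k <= slope_max * dT x y.
Proof.
  intros Hx Hn. pose proof Hx as [Hk [Hi Hag]].
  unfold bary; destruct excluded_middle_informative as [_|]; [|contradiction].
  assert (Hn' : ~ agree (retract y) (vpoint k) (vlevel k))
    by (intros H; apply Hn; repeat split; auto).
  apply not_all_ex_not in Hn' as [i Hi']. apply imply_to_and in Hi' as [Hil Hneq].
  destruct i as [|i]; [exfalso; apply Hneq; now rewrite !g_0|].
  assert (Hb : branch (retract x) (retract y) <= rad i).
  { apply branch_le_of_neq. rewrite (Hag (S i) Hil). auto. }
  destruct (vert_is_vertex k Hk) as [_ Hkm].
  eapply Rle_trans; [|apply Rmult_le_compat_l; [left; apply slope_max_pos|apply retract_lipschitz]].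
  apply tent_le_sub_lo; [apply slope_le_max; auto|apply Tbar_dist_ge0|].
  destruct (vlevel k) as [|l]; [lia|]. cbn [tent_lo].
  pose proof (rad_le i l ltac:(lia)). rewrite Tbar_distE.
  set (tx := tt (retract x)); set (ty := tt (retract y)).
  pose proof (Rmin_l (Rmin tx ty) (branch (retract x) (retract y))).
  pose proof (Rmin_r (Rmin tx ty) (branch (retract x) (retract y))).
  pose proof (Rmin_r tx ty). lra.
Qed.

Lemma bary_lipschitz x y k : Rabs (bary x k - bary y k) <= slope_max * dT x y.
Proof.
  pose proof slope_max_pos. pose proof (Tbar_dist_ge0 x y).
  destruct (classic (carries k x)) as [Hx|Hx], (classic (carries k y)) as [Hy|Hy].
  - unfold bary. do 2 (destruct excluded_middle_informative; [|contradiction]).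
    destruct Hx as [Hk _]. destruct (slope_le_max _ (proj2 (vert_is_vertex k Hk))).
    eapply Rle_trans; [apply tent_lipschitz; eauto|]. apply Rmult_le_compat_l; [lra|].
    eapply Rle_trans; [apply Rabs_tt_sub_le|apply retract_lipschitz].
  - replace (bary y k) with 0 by (unfold bary; destruct excluded_middle_informative; tauto).
    rewrite Rminus_0_r, Rabs_pos_eq by apply bary_ge0. apply bary_le_carries; auto.
  - replace (bary x k) with 0 by (unfold bary; destruct excluded_middle_informative; tauto).
    rewrite Rminus_0_l, Rabs_Ropp, Rabs_pos_eq by apply bary_ge0.
    rewrite Tbar_dist_sym. apply bary_le_carries; auto.
  - unfold bary. do 2 (destruct excluded_middle_informative; [contradiction|]).
    rewrite Rminus_0_r, Rabs_R0. apply Rmult_le_pos; lra.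
Qed.

Lemma bary_cont : cont_on dT (fun _ => True) (real_dist nK) bary.
Proof.
  intros x _ e He. pose proof slope_max_pos. pose proof (pos_INR nK).
  set (C := INR nK * slope_max + 1).
  exists (e / C). split; [apply Rdiv_lt_0_compat; unfold C; nra|].
  intros y _ Hd. unfold real_dist.
  eapply Rle_lt_trans; [apply sumR_map_le_const; intros k; apply bary_lipschitz|].
  pose proof (Tbar_dist_ge0 x y).
  assert (Hd' : dT x y * C < e).
  { apply Rmult_lt_compat_r with (r := C) in Hd; [|unfold C; nra].
    unfold Rdiv in Hd. rewrite Rmult_assoc, Rinv_l, Rmult_1_r in Hd; unfold C in *; nra. }
  unfold C in Hd'. nra.
Qed.

Definition hom_radius (s : R) : R := rad m + Rmax 0 (Rmin s 1) * (1/2)^m.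

Lemma hom_radius_lipschitz s s' : Rabs (hom_radius s - hom_radius s') <= (1/2)^m * Rabs (s - s').
Proof.
  unfold hom_radius. pose proof (half_pow_pos m).
  replace (rad m + Rmax 0 (Rmin s 1) * (1/2)^m - (rad m + Rmax 0 (Rmin s' 1) * (1/2)^m))
    with ((Rmax 0 (Rmin s 1) - Rmax 0 (Rmin s' 1)) * (1/2)^m) by ring.
  rewrite Rabs_mult, (Rabs_pos_eq ((1/2)^m)), Rmult_comm by lra.
  apply Rmult_le_compat_l; [lra|].
  unfold Rmax, Rmin, Rabs; repeat destruct Rle_dec; repeat destruct Rcase_abs; lra.
Qed.

Lemma transfer_data delta : (1/2)^m <= delta ->
  exists (n : nat) (simp : list nat -> Prop),
    simplicial_complex_dim_le n simp 1 /\
    exists (i : T -> (nat -> R)) (p : (nat -> R) -> T) (H : R -> T -> T),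
      (forall x, in_realization n simp (i x)) /\
      cont_on dT (fun _ => True) (real_dist n) i /\
      cont_on (real_dist n) (in_realization n simp) dT p /\
      homotopy_cont dT dT H /\
      (forall x, H 0 x = p (i x)) /\
      (forall x, H 1 x = x) /\
      (forall x s s', 0 <= s <= 1 -> 0 <= s' <= 1 -> dT (H s x) (H s' x) <= delta).
Proof.
  intros Hdel. pose proof (half_pow_pos m).
  exists nK, simplex. split; [apply simplex_complex|].
  exists bary, proj, (fun s x => trunc x (hom_radius s)).
  split; [intros x; apply bary_spec|]. split; [apply bary_cont|]. split; [apply proj_cont|].
  split; [|split; [|split]].
  - apply trunc_homotopy_cont with ((1/2)^m); [lra| |apply hom_radius_lipschitz].
    intros s _. unfold hom_radius. pose proof (rad_ge0 m). pose proof (Rmax_l 0 (Rmin s 1)). nra.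
  - intros x. rewrite (proj2 (bary_spec x)). unfold retract, hom_radius. f_equal.
    rewrite Rmin_left, Rmax_left by lra. ring.
  - intros x. unfold hom_radius. rewrite Rmin_left, Rmax_right by lra. apply trunc_id.
    unfold rad. pose proof (tt_bounds x). lra.
  - intros x s s' Hs Hs'. eapply Rle_trans; [apply dist_trunc_r|].
    eapply Rle_trans; [apply hom_radius_lipschitz|].
    assert (Rabs (s - s') <= 1) by (unfold Rabs; destruct Rcase_abs; lra). nra.
Qed.

End Transfer.
End Tree.

Theorem mainTheorem1 (V : Type) (adj : V -> V -> Prop) (x0 : V) :
  simplicial_tree adj -> locally_finite adj ->
  transfer_space (Tbar_dist adj x0) 1.
Proof.
  intros _ LF. split; [apply Tbar_is_metric|]. split; [apply Tbar_compact; auto|].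
  split; [apply Tbar_contractible|].
  intros delta Hdel. destruct (half_pow_lt_ex delta Hdel) as [m Hm].
  destruct (vertices_upto_finite V adj x0 LF m) as [L [HL1 HL2]].
  apply (transfer_data V adj x0 m L HL1 HL2). lra.
Qed.
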